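(* Let $\mathbb{F}_q$ be a finite field, $S\subseteq\mathbb{F}_q\setminus\{0\}$ symmetric, $G=\Gamma(\mathbb{F}_q,S)$ and $\overline{G}$ its complement. Then $\overline{G}=\Gamma(\mathbb{F}_q,\overline{S})$ with $\overline{S}=(\mathbb{F}_q\setminus\{0\})\setminus S$, and \[\Theta_{\mathrm{lin}}(G)\cdot\Theta_{\mathrm{lin}}(\overline{G})\le q.\]
   Context: For a symmetric set $S\subseteq\mathbb{F}_q\setminus\{0\}$ ($S=-S$), the Cayley graph $\Gamma(\mathbb{F}_q,S)$ has vertex set $\mathbb{F}_q$, with $u\sim v$ iff $u-v\in S$. $G^k$ is the $k$-fold strong product (distinct vertices adjacent iff in each coordinate they are equal or adjacent). $\alpha_{\mathrm{lin}}(G^k)$ is the largest size of an independent set of $G^k$ that is a linear subspace of $\mathbb{F}_q^k$, and $\Theta_{\mathrm{lin}}(G)=\sup_k\alpha_{\mathrm{lin}}(G^k)^{1/k}$. *)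

From HB Require Import structures.
From mathcomp Require Import all_boot all_order all_algebra all_field.
From mathcomp Require Import all_classical all_reals all_analysis.
Set Implicit Arguments. Unset Strict Implicit. Unset Printing Implicit Defensive.
Import Order.TTheory GRing.Theory Num.Theory.
Local Open Scope ring_scope.

Definition cayley (F : finFieldType) (S : {set F}) : rel F :=
  fun u v => (u - v) \in S.

Definition compl_graph (T : eqType) (e : rel T) : rel T :=
  fun u v => (u != v) && ~~ e u v.

Definition strong_pow (F : finFieldType) (e : rel F) (k : nat) : rel 'rV[F]_k :=
  fun u v => (u != v) && [forall i, (u 0 i == v 0 i) || e (u 0 i) (v 0 i)].

Definition independent (T : finType) (e : rel T) (A : {set T}) : bool :=
  [forall u in A, forall v in A, ~~ e u v].

Definition is_subspace (F : finFieldType) (k : nat) (A : {set 'rV[F]_k}) : bool :=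
  (0 \in A) && [forall u in A, forall v in A, forall a : F, a *: u + v \in A].

Definition alpha_lin (F : finFieldType) (e : rel F) (k : nat) : nat :=
  \max_(A : {set 'rV[F]_k} | @is_subspace F k A && independent (@strong_pow F e k) A) #|A|.

Definition Theta_lin (R : realType) (F : finFieldType) (e : rel F) : R :=
  sup [set x : R | exists k : nat, (0 < k)%N /\
         x = powR ((@alpha_lin F e k)%:R) (k%:R^-1)]%classic.

From HB Require Import structures.
From mathcomp Require Import all_boot all_order all_algebra all_field all_fingroup all_solvable.
From mathcomp Require Import all_classical all_reals all_analysis.
Import Order.TTheory GRing.Theory Num.Theory FinRing.Theory.
Set Implicit Arguments. Unset Strict Implicit. Unset Printing Implicit Defensive.
Local Open Scope ring_scope.

(* The complement of G = Gamma(F_q, S) is the Cayley graph of the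
   complementary connection set Sbar, and the bound
   Theta_lin(G) * Theta_lin(Gbar) <= q is the product of two estimates

      Theta_lin(e) <= q ^ (|T| / (q - 1)),

   valid whenever 0 is adjacent to every nonzero x outside a set T, used
   with T = Sbar for G and T = S for Gbar; since |S| + |Sbar| = q - 1 the
   exponents add up to 1.
   The estimate comes from a polynomial method.  An independent set of G^k
   that is a subspace of F^k is the injective image of some F^r under a
   matrix B, so it has q^r elements, and each nonzero vector yB in it has a
   coordinate in T (it is not adjacent to 0).  Hence
   y |-> prod_i prod_(t in T) (1 - (yB)_i / t) is the indicator of 0 on F^r
   and sums to 1.  It is a polynomial of degree <= k|T|, while polynomials of
   degree < r(q - 1) sum to 0 over F^r (power sums over F_q vanish below
   exponent q - 1); so r(q - 1) <= k|T|, i.e. alpha_lin(G^k)^(1/k) <=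
   q^(|T|/(q-1)). *)

Section PowerSums.
Variable F : finFieldType.
Local Notation q := #|F|.

(* The characteristic divides q: the additive exponent of F kills 1. *)
Lemma natr_card_finField : (q%:R : F) = 0.
Proof.
have kill1 : (exponent [set: F])%:R == 0 :> F.
  by rewrite -zmodXgE expg_exponent // inE.
have /dvdnP [m card_eq] := exponent_dvdn [set: F].
by rewrite -cardsT card_eq natrM (eqP kill1) mulr0.
Qed.

(* At most e elements are e-th roots of unity, so for 0 < e < q - 1 some
   nonzero a satisfies a^e != 1. *)
Lemma exists_not_unity_root (e : nat) : (0 < e < q.-1)%N ->
  exists2 a : F, a != 0 & a ^+ e != 1.
Proof.
case/andP=> e_gt0 e_small; apply/exists_inP; rewrite -negb_forall_in.
apply/negP=> /forall_inP all_roots.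
suff : (size (enum [set~ 0%R : F]) <= e)%N.
  by rewrite -cardE cardsC1 leqNgt e_small.
apply: (max_unity_roots e_gt0 _ (enum_uniq _)).
apply/allP=> x; rewrite mem_enum in_setC1 => x_neq0.
by rewrite unity_rootE all_roots.
Qed.

(* The power sum sum_t t^e vanishes for e < q - 1: substituting t := a t
   multiplies it by a^e, which can be chosen different from 1. *)
Lemma sum_expr_finField (e : nat) : (e < q.-1)%N -> \sum_(t : F) t ^+ e = 0.
Proof.
case: e => [|e] e_small.
  by under eq_bigr do rewrite expr0; rewrite sumr_const; exact: natr_card_finField.
have [a a_neq0 ae_neq1] := @exists_not_unity_root e.+1 e_small.
have scaled : \sum_(t : F) t ^+ e.+1 = a ^+ e.+1 * \sum_(t : F) t ^+ e.+1.
  rewrite big_distrr /= (reindex_inj (mulfI a_neq0)) /=.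
  by apply: eq_bigr => t _; rewrite exprMn.
apply/eqP; move/eqP: scaled; rewrite -subr_eq0 -{1}[\sum_t _]mul1r -mulrBl.
by rewrite mulf_eq0 subr_eq0 eq_sym (negbTE ae_neq1).
Qed.

End PowerSums.

Section PolynomialFunctions.
Variables (F : finFieldType) (d : nat).
Local Notation q := #|F|.
Local Notation expvec := {ffun 'I_d -> nat}.

Definition monomial (e : expvec) (y : 'rV[F]_d) : F := \prod_j y 0 j ^+ e j.
Definition mdeg (e : expvec) : nat := (\sum_j e j)%N.

Definition polyfun_le (n : nat) (h : 'rV[F]_d -> F) : Prop :=
  exists s : seq (expvec * F),
    all (fun m => mdeg m.1 <= n)%N s /\
    forall y, h y = \sum_(m <- s) m.2 * monomial m.1 y.

(* A monomial of degree < d(q - 1) has some exponent < q - 1, so its sum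
   over F^d, a product of one-variable power sums, vanishes. *)
Lemma sum_monomial (e : expvec) : (mdeg e < d * q.-1)%N ->
  \sum_(y : 'rV[F]_d) monomial e y = 0.
Proof.
move=> deg_small.
have ffun_row : bijective (fun f : {ffun 'I_d -> F} => \row_j f j).
  exists (fun y : 'rV[F]_d => [ffun j => y 0 j]).
    by move=> f; apply/ffunP => j; rewrite ffunE mxE.
  by move=> y; apply/rowP => j; rewrite mxE ffunE.
rewrite (reindex _ (onW_bij _ ffun_row)) /= /monomial.
under eq_bigr do under eq_bigr do rewrite mxE.
rewrite -(bigA_distr_bigA (fun j t => t ^+ e j)) /=.
have [j e_j_small] : exists j, (e j < q.-1)%N.
  apply/existsP; apply: contraLR deg_small; rewrite negb_exists -leqNgt.
  move=> /forallP all_large; rewrite -[X in (X * _)%N](card_ord d).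
  rewrite -sum_nat_const; apply: leq_sum => i _; rewrite leqNgt; exact: all_large.
by rewrite (bigD1 j) //= sum_expr_finField // mul0r.
Qed.

Lemma polyfun_sum0 (n : nat) (h : 'rV[F]_d -> F) :
  polyfun_le n h -> (n < d * q.-1)%N -> \sum_y h y = 0.
Proof.
move=> [s [deg_s h_eq]] n_small; under eq_bigr do rewrite h_eq.
rewrite exchange_big /= big1_seq // => m /andP [_ m_in_s].
rewrite -big_distrr /= sum_monomial ?mulr0 //.
by apply: leq_ltn_trans n_small; move/allP: deg_s; apply.
Qed.

Lemma polyfun_const (n : nat) (c : F) : polyfun_le n (fun _ => c).
Proof.
exists [:: ([ffun _ => 0%N], c)]; split.
  by rewrite /= andbT /mdeg big1 // => j _; rewrite ffunE.
by move=> y; rewrite big_seq1 /= /monomial big1 ?mulr1 // => j _; rewrite ffunE.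
Qed.

Lemma polyfun_affine (c : F) (a : 'cV[F]_d) :
  polyfun_le 1 (fun y => c + (y *m a) 0 0).
Proof.
pose unit_exp j : expvec := [ffun i => (i == j) : nat].
have monomial_unit y j : monomial (unit_exp j) y = y 0 j.
  rewrite /monomial (bigD1 j) //= big1 ?ffunE ?eqxx ?mulr1 //.
  by move=> i /negbTE i_neq_j; rewrite ffunE i_neq_j.
exists (([ffun _ => 0%N], c) :: [seq (unit_exp j, a j 0) | j <- enum 'I_d]).
split.
  rewrite /= /mdeg big1 => [|j _]; last by rewrite ffunE.
  rewrite all_map; apply/allP => j _ /=.
  rewrite (bigD1 j) //= big1 ?ffunE ?eqxx // => i /negbTE i_neq_j.
  by rewrite ffunE i_neq_j.
move=> y; rewrite big_cons big_map big_enum /= mxE.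
have -> : monomial [ffun=> 0%N] y = 1 by rewrite /monomial big1 // => j _; rewrite ffunE.
rewrite mulr1; congr (_ + _).
by apply: eq_bigr => j _; rewrite monomial_unit mulrC.
Qed.

Lemma polyfun_mul (n m : nat) (h g : 'rV[F]_d -> F) :
  polyfun_le n h -> polyfun_le m g -> polyfun_le (n + m) (fun y => h y * g y).
Proof.
move=> [s [deg_s h_eq]] [t [deg_t g_eq]].
exists [seq ([ffun j => u.1 j + v.1 j]%N, u.2 * v.2)
         | u : expvec * F <- s, v : expvec * F <- t].
split.
  apply/allP => x /allpairsP [[u v] [u_in_s v_in_t ->]] /=.
  rewrite /mdeg (eq_bigr (fun j => u.1 j + v.1 j)%N) => [|j _]; last first.
    by rewrite ffunE.
  by rewrite big_split /= leq_add //; [move/allP: deg_s; apply | move/allP: deg_t; apply].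
move=> y; rewrite h_eq g_eq big_distrl /= big_allpairs_dep /=.
apply: eq_bigr => u _; rewrite big_distrr /=; apply: eq_bigr => v _.
rewrite /monomial -!mulrA; congr (_ * _); rewrite mulrCA; congr (_ * _).
by rewrite -big_split /=; apply: eq_bigr => j _; rewrite ffunE exprD.
Qed.

Lemma polyfun_prod (I : Type) (r : seq I) (n : nat) (G : I -> 'rV[F]_d -> F) :
  (forall i, polyfun_le n (G i)) ->
  polyfun_le (size r * n) (fun y => \prod_(i <- r) G i y).
Proof.
move=> deg_G; elim: r => [|i r IHr].
  have [s [deg_s one_eq]] := polyfun_const 0 1.
  by exists s; split => // y; rewrite big_nil -one_eq.
have [s [deg_s prod_eq]] := polyfun_mul (deg_G i) IHr.
by exists s; split => [|y]; rewrite ?mulSn // big_cons -prod_eq.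
Qed.

End PolynomialFunctions.

Section Subspaces.
Variables (F : finFieldType) (k : nat).
Local Notation q := #|F|.

Lemma subspace_mulmx (A : {set 'rV[F]_k}) (n : nat) (M : 'M[F]_(n, k)) :
  is_subspace A -> (forall i, row i M \in A) -> forall z, z *m M \in A.
Proof.
case/andP=> A0 /forall_inP A_closed rows_in z.
have A_lin u v a : u \in A -> v \in A -> a *: u + v \in A.
  by move=> uA vA; move/forall_inP: (A_closed u uA) => /(_ v vA) /forallP.
rewrite mulmx_sum_row; apply: (big_ind (fun x => x \in A)) => //.
  by move=> u v uA vA; rewrite -[u]scale1r A_lin.
by move=> i _; rewrite -[_ *: _]addr0 A_lin.
Qed.

(* Every subspace A of F^k is the image of F^r under a row-free (hence
   injective) matrix B, a row basis of the matrix listing A. *)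
Lemma subspace_param (A : {set 'rV[F]_k}) : is_subspace A ->
  exists r (B : 'M[F]_(r, k)), row_free B /\ A = [set y *m B | y : 'rV[F]_r].
Proof.
move=> A_sub.
pose M : 'M[F]_(#|A|, k) := \matrix_(i < #|A|) (enum_val i : 'rV_k).
exists (\rank M), (row_base M); split; first exact: row_base_free.
apply/setP => a; apply/idP/imsetP => [aA | [y _ ->]].
  have : (a <= row_base M)%MS.
    rewrite eq_row_base -(enum_rankK_in aA aA) -(rowK (fun i => enum_val i)).
    exact: row_sub.
  by case/submxP => y ->; exists y.
have : (y *m row_base M <= M)%MS by rewrite -(eq_row_base M) submxMl.
case/submxP => z ->; apply: subspace_mulmx A_sub _ z => i.
by rewrite rowK enum_valP.
Qed.

(* The Chevalley-type bound: if y B has a coordinate in T (with 0 \notin T)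
   for every nonzero y in F^r, then
   y |-> prod_i prod_(t in T) (1 - (yB)_i / t) is the indicator of 0 on F^r,
   a polynomial function of degree <= k|T| with sum 1, so r(q-1) <= k|T|. *)
Lemma rowspace_hitting_bound (r : nat) (B : 'M[F]_(r, k)) (T : {set F}) :
  0 \notin T -> (forall y : 'rV[F]_r, y != 0 -> exists i, (y *m B) 0 i \in T) ->
  (r * q.-1 <= k * #|T|)%N.
Proof.
move=> T0 hits.
pose h (y : 'rV[F]_r) :=
  \prod_(i <- enum 'I_k) \prod_(t <- enum T) (1 + (y *m (- t^-1 *: col i B)) 0 0).
have h_deg : polyfun_le (k * #|T|) h.
  have := polyfun_prod (enum 'I_k) (fun i => polyfun_prod (enum T)
    (fun t => polyfun_affine 1 (- t^-1 *: col i B))).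
  by rewrite size_enum_ord -cardE muln1.
have factorE y i t : 1 + (y *m (- t^-1 *: col i B)) 0 0 = 1 - (y *m B) 0 i / t.
  by rewrite -scalemxAr colE mulmxA -colE !mxE mulNr mulrC.
have h0 : h 0 = 1.
  by rewrite /h big1_seq // => i _; rewrite big1_seq // => t _; rewrite mul0mx mxE addr0.
have h_nz y : y != 0 -> h y = 0.
  move=> y_neq0; have [i hit] := hits y y_neq0.
  have yBi_neq0 : (y *m B) 0 i != 0 by apply: contraNneq T0 => <-.
  rewrite /h (bigD1_seq i) ?mem_enum ?enum_uniq //=.
  rewrite (bigD1_seq ((y *m B) 0 i)) ?mem_enum ?enum_uniq //=.
  by rewrite factorE divff // subrr !mul0r.
have sum_h : \sum_y h y = 1.
  rewrite (bigD1 0) //= h0 big1 ?addr0 // => y y_neq0; exact: h_nz.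
rewrite leqNgt; apply/negP => deg_small.
by move: (polyfun_sum0 h_deg deg_small); rewrite sum_h; apply/eqP; rewrite oner_eq0.
Qed.

Lemma subspace_hitting_bound (A : {set 'rV[F]_k}) (T : {set F}) :
  0 \notin T -> is_subspace A ->
  (forall a, a \in A -> a != 0 -> exists i, a 0 i \in T) ->
  exists r, #|A| = (q ^ r)%N /\ (r * q.-1 <= k * #|T|)%N.
Proof.
move=> T0 /subspace_param [r [B [B_free ->]]] hits; exists r; split.
  by rewrite card_imset ?card_mx ?mul1n //; exact: row_free_inj.
apply: rowspace_hitting_bound T0 _ => y y_neq0; apply: hits; first exact: imset_f.
apply: contra y_neq0 => /eqP yB0; apply/eqP; apply: (row_free_inj B_free).
by rewrite yB0 mul0mx.
Qed.

End Subspaces.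

Section LinearShannonCapacity.
Variables (F : finFieldType) (e : rel F) (T : {set F}).
Local Notation q := #|F|.

Hypothesis T0 : 0 \notin T.
Hypothesis adj_outside : forall x : F, x != 0 -> x \notin T -> e x 0.

Lemma strong_pow_nonadj0 (k : nat) (u : 'rV[F]_k) :
  u != 0 -> ~~ @strong_pow F e k u 0 -> exists i, u 0 i \in T.
Proof.
rewrite /strong_pow => u_neq0; rewrite u_neq0 negb_forall => /existsP [i].
rewrite negb_or !mxE => /andP [ui_neq0 not_adj]; exists i.
by apply: contraNT not_adj; exact: adj_outside.
Qed.

Lemma zero_subspace_independent (k : nat) :
  is_subspace [set 0 : 'rV[F]_k] && independent (@strong_pow F e k) [set 0].
Proof.
apply/andP; split.
  apply/andP; split; first by rewrite inE.
  apply/forall_inP => u /set1P ->; apply/forall_inP => v /set1P ->.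
  by apply/forallP => a; rewrite scaler0 addr0 inE.
apply/forall_inP => u /set1P ->; apply/forall_inP => v /set1P ->.
by rewrite /strong_pow eqxx.
Qed.

Lemma alpha_lin_bound (k : nat) :
  exists r, alpha_lin e k = (q ^ r)%N /\ (r * q.-1 <= k * #|T|)%N.
Proof.
pose P := [pred A : {set 'rV[F]_k} | is_subspace A && independent (@strong_pow F e k) A].
have P_nonempty : (0 < #|P|)%N.
  by apply/card_gt0P; exists [set 0]; exact: zero_subspace_independent.
have [A /andP [A_sub A_ind] alpha_eq] := @eq_bigmax_cond _ P (fun A => #|A|) P_nonempty.
rewrite /alpha_lin alpha_eq; have A0 : 0 \in A by case/andP: A_sub.
apply: subspace_hitting_bound T0 A_sub _ => a aA a_neq0.
apply: strong_pow_nonadj0 a_neq0 _.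
by move/forall_inP: A_ind => /(_ a aA) /forall_inP; apply.
Qed.

(* Hence 0 <= Theta_lin(G) <= q ^ (|T| / (q - 1)): the bound is an upper
   bound of every root alpha_lin(G^k)^(1/k), and the root for k = 1 is
   nonnegative. *)
Lemma Theta_lin_bound (R : realType) :
  0 <= Theta_lin R e /\ Theta_lin R e <= powR (q%:R : R) (#|T|%:R / q.-1%:R).
Proof.
have q_gt1 : (1 < q)%N := finNzRing_gt1 F.
have q1_gt0 : (0 < q.-1)%N by rewrite -ltnS prednK // ltnW.
pose roots := [set x : R | exists k : nat, (0 < k)%N /\
                 x = powR ((alpha_lin e k)%:R) (k%:R^-1)]%classic.
pose bound := powR (q%:R : R) (#|T|%:R / q.-1%:R).
have bound_ub : ubound roots bound.
  move=> x [k [k_gt0 ->]]; have [r [-> deg_r]] := alpha_lin_bound k.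
  rewrite natrX -powR_mulrn ?ler0n // -powRrM /bound.
  apply: ler_powR; first by rewrite ler1n ltnW.
  rewrite ler_pdivlMr ?ltr0n // mulrAC ler_pdivrMr ?ltr0n //.
  by rewrite -!natrM ler_nat [(#|T| * k)%N]mulnC.
have alpha1_in : roots (powR ((alpha_lin e 1)%:R) (1%:R^-1)) by exists 1%N.
split; last by apply: ge_sup => //; eexists; exact: alpha1_in.
apply: le_trans (powR_ge0 _ _) (ub_le_sup _ alpha1_in).
by exists bound.
Qed.

End LinearShannonCapacity.

Lemma compl_cayley (F : finFieldType) (S : {set F}) (u v : F) :
  compl_graph (cayley S) u v = cayley ([set x : F | x != 0] :\: S) u v.
Proof. by rewrite /compl_graph /cayley !inE subr_eq0 andbC. Qed.

Lemma card_connection_compl (F : finFieldType) (S : {set F}) : 0 \notin S ->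
  (#|[set x : F | x != 0%R] :\: S| + #|S| = #|F|.-1)%N.
Proof.
move=> S0; rewrite -(cardsC1 (0%R : F)) -(cardsID S [set~ 0%R : F]) addnC.
congr (_ + _); last by apply: eq_card => x; rewrite !inE.
apply: eq_card => x; rewrite !inE andb_idl // => xS.
by apply: contraNneq S0 => <-.
Qed.

Theorem mainTheorem3 (R : realType) (F : finFieldType) (S : {set F})
  (S0 : 0 \notin S) (Ssym : forall x, x \in S -> - x \in S) :
  (forall u v : F, compl_graph (cayley S) u v =
                   cayley ([set x : F | x != 0] :\: S) u v) /\
  Theta_lin R (cayley S) * Theta_lin R (compl_graph (cayley S)) <= (#|F|%:R : R).
Proof.
split; first exact: compl_cayley.
set Sbar := [set x : F | x != 0] :\: S.
have Sbar0 : 0 \notin Sbar by rewrite !inE eqxx andbF.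
have adj_G x : x != 0 -> x \notin Sbar -> cayley S x 0.
  by rewrite /cayley subr0 !inE => ->; rewrite andbT negbK.
have adj_Gbar x : x != 0 -> x \notin S -> compl_graph (cayley S) x 0.
  by move=> x_neq0 x_notin; rewrite /compl_graph /cayley subr0 x_neq0 x_notin.
have [G_ge0 G_le] := Theta_lin_bound Sbar0 adj_G R.
have [Gbar_ge0 Gbar_le] := Theta_lin_bound S0 adj_Gbar R.
apply: le_trans (ler_pM G_ge0 Gbar_ge0 G_le Gbar_le) _.
have q_gt1 : (1 < #|F|)%N := finNzRing_gt1 F.
have q1_neq0 : (#|F|.-1%:R : R) != 0 by rewrite pnatr_eq0 -lt0n -ltnS prednK // ltnW.
have q_neq0 : (#|F|%:R : R) != 0 by rewrite pnatr_eq0 -lt0n ltnW.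
rewrite -powRD; last by apply/implyP.
by rewrite -mulrDl -natrD card_connection_compl // divff // powRr1 // ler0n.
Qed.
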